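(* Let $\mathcal{H}_\ell,\mathcal{H}_r$ be Hilbert spaces, $\mathcal{H}_S$ a finite-dimensional Hilbert space, $H_\ell,H_S,H_r$ self-adjoint operators on $\mathcal{H}_\ell,\mathcal{H}_S,\mathcal{H}_r$, and $\chi_\ell\in\mathcal{H}_\ell$, $\chi_r\in\mathcal{H}_r$, $\delta_\ell,\delta_r\in\mathcal{H}_S$ non-zero vectors. On $\mathcal{H}=\mathcal{H}_\ell\oplus\mathcal{H}_S\oplus\mathcal{H}_r$ let $H_0=H_\ell+H_S+H_r$ and $H_{\lambda,\nu}=H_0+\lambda[(\chi_\ell,\cdot)\delta_\ell+(\delta_\ell,\cdot)\chi_\ell]+\nu[(\chi_r,\cdot)\delta_r+(\delta_r,\cdot)\chi_r]$ for $\lambda,\nu\in\mathbb{R}$. Then for $z\in\mathbb{C}\setminus\mathbb{R}$, $$G_{\lambda,\nu}(\delta_\ell,\delta_\ell,z)=\frac{1}{D(z)}\Big[\big(1-\nu^2G_0(\chi_r,\chi_r,z)G_0(\delta_r,\delta_r,z)\big)G_0(\delta_\ell,\delta_\ell,z)+\nu^2G_0(\chi_r,\chi_r,z)G_0(\delta_\ell,\delta_r,z)G_0(\delta_r,\delta_\ell,z)\Big],$$ $$G_{\lambda,\nu}(\chi_\ell,\chi_\ell,z)=\frac{1}{D(z)}\Big[G_0(\chi_\ell,\chi_\ell,z)\big(1-\nu^2G_0(\chi_r,\chi_r,z)G_0(\delta_r,\delta_r,z)\big)\Big],$$ where $$D(z)=\big(1-\nu^2G_0(\chi_r,\chi_r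,z)G_0(\delta_r,\delta_r,z)\big)\big(1-\lambda^2G_0(\chi_\ell,\chi_\ell,z)G_0(\delta_\ell,\delta_\ell,z)\big)-\nu^2\lambda^2G_0(\chi_r,\chi_r,z)G_0(\chi_\ell,\chi_\ell,z)G_0(\delta_\ell,\delta_r,z)G_0(\delta_r,\delta_\ell,z).$$
   Context: For $\varphi,\psi\in\mathcal{H}$ and $z\in\mathbb{C}\setminus\mathbb{R}$, $G_{\lambda,\nu}(\varphi,\psi,z)=(\varphi,(H_{\lambda,\nu}-z)^{-1}\psi)$ and $G_0=G_{0,0}$ (the resolvent of $H_0$); the inner product is linear in the second argument. *)

From HB Require Import structures.
From mathcomp Require Import all_boot all_order all_algebra.
From mathcomp Require Import complex.
From mathcomp Require Import boolp classical_sets reals.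
Set Implicit Arguments.
Unset Strict Implicit.
Unset Printing Implicit Defensive.
Import Order.TTheory GRing.Theory Num.Theory.
Local Open Scope ring_scope.
Local Open Scope classical_set_scope.

(* Complex inner product, linear in the SECOND argument, antilinear in the first. *)
Definition inner_product (R : realType) (V : lmodType R[i])
    (ip : V -> V -> R[i]) : Prop :=
  [/\ (forall (a : R[i]) (x y w : V), ip x (a *: y + w) = a * ip x y + ip x w),
      (forall x y : V, ip y x = (ip x y)^*),
      (forall x : V, 0 <= ip x x) &
      (forall x : V, ip x x = 0 -> x = 0)].

Definition ipnorm (R : realType) (V : lmodType R[i]) (ip : V -> V -> R[i])
    (x : V) : R[i] := sqrtC (ip x x).

Definition is_hilbert (R : realType) (V : lmodType R[i])
    (ip : V -> V -> R[i]) : Prop :=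
  inner_product ip /\
  forall u : nat -> V,
    (forall eps : R[i], 0 < eps -> exists N : nat, forall m n : nat,
        (N <= m)%N -> (N <= n)%N -> ipnorm ip (u m - u n) < eps) ->
    exists v : V, forall eps : R[i], 0 < eps -> exists N : nat, forall n : nat,
        (N <= n)%N -> ipnorm ip (u n - v) < eps.

Definition finite_dim (R : realType) (V : lmodType R[i]) : Prop :=
  exists s : seq V, forall v : V, exists c : nat -> R[i],
    v = \sum_(i < size s) c i *: s`_i.

(* (Possibly unbounded) self-adjoint operator A with domain D:
   D is a dense linear subspace, A is linear on D, and A^* = A, i.e.
   D(A^* ) = {y | exists w, forall x in D, (w, x) = (y, A x)} equals D
   and A^* y = A y on D. *)
Definition self_adjoint (R : realType) (V : lmodType R[i])
    (ip : V -> V -> R[i]) (D : set V) (A : V -> V) : Prop :=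
  [/\ D 0,
      (forall (a : R[i]) (x y : V), D x -> D y ->
          D (a *: x + y) /\ A (a *: x + y) = a *: A x + A y),
      (forall (v : V) (eps : R[i]), 0 < eps ->
          exists x, D x /\ ipnorm ip (v - x) < eps),
      (forall x y : V, D x -> D y -> ip (A y) x = ip y (A x)) &
      (forall y w : V, (forall x, D x -> ip w x = ip y (A x)) -> D y)].

Definition resolvent (R : realType) (V : lmodType R[i]) (D : set V)
    (A : V -> V) (z : R[i]) (psi : V) : V :=
  match pselect (exists u : V, D u /\ A u - z *: u = psi) with
  | left h => projT1 (cid h)
  | right _ => 0
  end.

Definition green (R : realType) (V : lmodType R[i]) (ip : V -> V -> R[i])
    (D : set V) (A : V -> V) (phi psi : V) (z : R[i]) : R[i] :=
  ip phi (resolvent D A z psi).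

Section DirectSum.
Context (R : realType) (Vl VS Vr : lmodType R[i]).
Definition sumV := ((Vl * VS) * Vr)%type.

Definition sum_ip (ipl : Vl -> Vl -> R[i]) (ipS : VS -> VS -> R[i])
    (ipr : Vr -> Vr -> R[i]) (x y : sumV) : R[i] :=
  ipl x.1.1 y.1.1 + ipS x.1.2 y.1.2 + ipr x.2 y.2.

Definition inl3 (v : Vl) : sumV := (v, 0, 0).
Definition inS3 (v : VS) : sumV := (0, v, 0).
Definition inr3 (v : Vr) : sumV := (0, 0, v).

Definition dom0 (Dl : set Vl) (DS : set VS) (Dr : set Vr) : set sumV :=
  [set x | Dl x.1.1 /\ DS x.1.2 /\ Dr x.2].

Definition H0 (Hl : Vl -> Vl) (HS : VS -> VS) (Hr : Vr -> Vr) (x : sumV) : sumV :=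
  (Hl x.1.1, HS x.1.2, Hr x.2).

Definition Hlamnu (ipl : Vl -> Vl -> R[i]) (ipS : VS -> VS -> R[i])
    (ipr : Vr -> Vr -> R[i]) (Hl : Vl -> Vl) (HS : VS -> VS) (Hr : Vr -> Vr)
    (chil : Vl) (chir : Vr) (dl dr : VS) (lam nu : R) (x : sumV) : sumV :=
  let ip := sum_ip ipl ipS ipr in
  H0 Hl HS Hr x
  + (lam%:C)%C *: (ip (inl3 chil) x *: inS3 dl + ip (inS3 dl) x *: inl3 chil)
  + (nu%:C)%C *: (ip (inr3 chir) x *: inS3 dr + ip (inS3 dr) x *: inr3 chir).
End DirectSum.

(* For z off the real axis and A self-adjoint, A - z is onto: the range of A - z
   is closed because |Im z|^2 ||u||^2 <= ||(A - z) u||^2, and anything orthogonal to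
   it lies in the domain of A with A w = z^* w, hence vanishes.  This yields the free
   resolvents ul, sl, sr, ur of chi_l, delta_l, delta_r, chi_r.  Since H_{lam,nu}
   differs from H_0 by a finite rank term, (H_{lam,nu} - z)^{-1} maps delta_l and chi_l
   into the span of ul (+) {sl, sr} (+) ur; on that ansatz the resolvent equation
   reduces to a 2x2 linear system with determinant D(z), which cannot vanish because
   H_{lam,nu} - z is injective, and Cramer's rule gives both formulas. *)

From HB Require Import structures.
From mathcomp Require Import all_boot all_order all_algebra.
From mathcomp Require Import complex.
From mathcomp Require Import boolp classical_sets reals.
From mathcomp Require Import ring lra.
Import Order.TTheory GRing.Theory Num.Theory.
Local Open Scope ring_scope.
Local Open Scope classical_set_scope.
Set Implicit Arguments.
Unset Strict Implicit.
Unset Printing Implicit Defensive.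

Lemma subrACA (V : zmodType) (a b c d : V) : a - b - (c - d) = a - c - (b - d).
Proof. by rewrite !opprB addrACA [in RHS]addrACA [- c + _]addrC. Qed.

Lemma addrBB (V : zmodType) (a b c d : V) : (a - b) + (c - d) = (a + c) - (b + d).
Proof. by rewrite opprD addrACA. Qed.

Lemma det2_eq0_kernel (F : comNzRingType) (a b c d : F) : a * d - b * c = 0 ->
  exists s t : F, [/\ s != 0 \/ t != 0, a * s + b * t = 0 & c * s + d * t = 0].
Proof.
move=> det0.
have [ba_neq0|] := boolP ((b != 0) || (a != 0)).
  exists b, (- a); split; [by case/orP: ba_neq0; [left|right; rewrite oppr_eq0] | ring |].
  by rewrite -[RHS]oppr0 -det0; ring.
rewrite negb_or !negbK => /andP[/eqP-> /eqP->].
have [dc_neq0|] := boolP ((d != 0) || (c != 0)).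
  exists d, (- c); split; [by case/orP: dc_neq0; [left|right; rewrite oppr_eq0] | ring | ring].
rewrite negb_or !negbK => /andP[/eqP-> /eqP->].
by exists 1, 0; split; [left; rewrite oner_eq0 | ring | ring].
Qed.

Section ComplexParts.
Variable R : realType.
Implicit Types c d : R[i].

Lemma ReM c d : complex.Re (c * d) = complex.Re c * complex.Re d - complex.Im c * complex.Im d.
Proof. by case: c; case: d. Qed.
Lemma ImM c d : complex.Im (c * d) = complex.Re c * complex.Im d + complex.Im c * complex.Re d.
Proof. by case: c => a b; case: d => e f /=; rewrite addrC. Qed.
Lemma Re_realM (r : R) c : complex.Re (r%:C%C * c) = r * complex.Re c.
Proof. by case: c => a b /=; rewrite mul0r subr0. Qed.
Lemma ReJ c : complex.Re c^* = complex.Re c.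
Proof. by case: c. Qed.
Lemma ImJ c : complex.Im c^* = - complex.Im c.
Proof. by case: c. Qed.
Lemma complex_ReIm_inj c d :
  complex.Re c = complex.Re d -> complex.Im c = complex.Im d -> c = d.
Proof. by case: c; case: d => /= a b e f -> ->. Qed.
Lemma Creal_real (r : R) : r%:C%C \is Num.real.
Proof. by apply/complex_realP; exists r. Qed.

End ComplexParts.

Section InnerProduct.
Variables (R : realType) (V : lmodType R[i]) (ip : V -> V -> R[i]).
Hypothesis hip : inner_product ip.

Lemma ipC x y : ip y x = (ip x y)^*.
Proof. by case: hip. Qed.

Lemma ipDr x y w : ip x (y + w) = ip x y + ip x w.
Proof. by case: hip => lin _ _ _; rewrite -[y]scale1r lin mul1r scale1r. Qed.

Lemma ip0r x : ip x 0 = 0.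
Proof. by apply: (addrI (ip x 0)); rewrite -ipDr !addr0. Qed.

Lemma ipZr a x y : ip x (a *: y) = a * ip x y.
Proof. by case: hip => lin _ _ _; rewrite -[a *: y]addr0 lin ip0r addr0. Qed.

Lemma ipNr x y : ip x (- y) = - ip x y.
Proof. by rewrite -scaleN1r ipZr mulN1r. Qed.

Lemma ipBr x y w : ip x (y - w) = ip x y - ip x w.
Proof. by rewrite ipDr ipNr. Qed.

Lemma ip0l y : ip 0 y = 0.
Proof. by rewrite ipC ip0r conjC0. Qed.

Lemma ipDl x y w : ip (x + y) w = ip x w + ip y w.
Proof. by rewrite ipC ipDr rmorphD /= -!ipC. Qed.

Lemma ipZl a x y : ip (a *: x) y = a^* * ip x y.
Proof. by rewrite ipC ipZr rmorphM /= -!ipC. Qed.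

Lemma ipNl x y : ip (- x) y = - ip x y.
Proof. by rewrite ipC ipNr rmorphN /= -!ipC. Qed.

Lemma ipBl x y w : ip (x - y) w = ip x w - ip y w.
Proof. by rewrite ipDl ipNl. Qed.

Definition sqnorm x := complex.Re (ip x x).
Local Notation N := sqnorm.
Local Notation Rip x y := (complex.Re (ip x y)).

Lemma ip_sqnorm x : ip x x = (N x)%:C%C.
Proof.
case: hip => _ _ ge0 _; move: (ge0 x); rewrite /N.
by case: (ip x x) => a b; rewrite lecE /= => /andP[/eqP -> _].
Qed.

Lemma sqnorm_ge0 x : 0 <= N x.
Proof. by case: hip => _ _ ge0 _; move: (ge0 x); rewrite ip_sqnorm ler0c. Qed.

Lemma sqnorm_eq0 x : N x = 0 -> x = 0.
Proof. by case: hip => _ _ _ def h; apply: def; rewrite ip_sqnorm h. Qed.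

Lemma sqnormD x y : N (x + y) = N x + N y + 2 * Rip x y.
Proof. rewrite /N ipDl !ipDr !raddfD /= [ip y x]ipC ReJ; lra. Qed.

Lemma sqnormZ a x :
  N (a *: x) = (complex.Re a ^+ 2 + complex.Im a ^+ 2) * N x.
Proof. by rewrite /N ipZl ipZr ip_sqnorm mulrA !ReM !ImM ReJ ImJ /=; ring. Qed.

Lemma sqnormZr (t : R) x : N (t%:C%C *: x) = t ^+ 2 * N x.
Proof. by rewrite sqnormZ /= expr0n addr0. Qed.

Lemma sqnormN x : N (- x) = N x.
Proof. by rewrite /N ipNl ipNr opprK. Qed.

Lemma sqnormBC x y : N (x - y) = N (y - x).
Proof. by rewrite -sqnormN opprB. Qed.

Lemma sqnorm_parallelogram x y : N (x - y) + N (x + y) = 2 * N x + 2 * N y.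
Proof. by rewrite !sqnormD sqnormN ipNr raddfN /=; lra. Qed.

Lemma sqnormD_le x y : N (x + y) <= 2 * N x + 2 * N y.
Proof. by rewrite -sqnorm_parallelogram lerDr sqnorm_ge0. Qed.

Lemma Re_ip_le x y (t : R) : 0 < t -> 2 * Rip x y <= t * N x + t^-1 * N y.
Proof.
move=> t0; have := sqnorm_ge0 (t%:C%C *: x - y).
rewrite sqnormD sqnormN sqnormZr ipNr ipZl (conj_Creal (Creal_real t)) raddfN /=.
rewrite Re_realM -(ler_pM2l t0) mulr0 => h; rewrite -(ler_pM2l t0).
by rewrite mulrDr !mulrA mulfV ?gt_eqF // mul1r; nra.
Qed.

Lemma sqnormD_le_eps x y (t : R) : 0 < t ->
  N (x + y) <= (1 + t) * N x + (1 + t^-1) * N y.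
Proof. by move=> t0; rewrite sqnormD; have := Re_ip_le x y t0; lra. Qed.

Lemma Re_ip_sqr_le x y : Rip x y ^+ 2 <= N x * N y.
Proof.
set r := Rip x y.
have quad t : 0 <= N x + 2 * t * r + t ^+ 2 * N y.
  have := sqnorm_ge0 (x + t%:C%C *: y).
  by rewrite sqnormD sqnormZr ipZr Re_realM -/r; lra.
have [y0|y_neq0] := eqVneq (N y) 0.
  have [r0|r_neq0] := eqVneq r 0; first by rewrite r0 y0 expr0n mulr0.
  have := quad (- (N x + 1) / (2 * r)); rewrite y0 mulr0 addr0.
  have -> : 2 * (- (N x + 1) / (2 * r)) * r = - (N x + 1) by field.
  lra.
have y_gt0 : 0 < N y by rewrite lt_def y_neq0 sqnorm_ge0.
have := quad (- r / N y).
have -> : N x + 2 * (- r / N y) * r + (- r / N y) ^+ 2 * N y = N x - r ^+ 2 / N y.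
  by field; rewrite gt_eqF.
by rewrite subr_ge0 ler_pdivrMr // mulrC.
Qed.

Lemma Im_ip_sqr_le x y : complex.Im (ip x y) ^+ 2 <= N x * N y.
Proof.
have := Re_ip_sqr_le x ('i *: y).
by rewrite sqnormZ ipZr ReM /= expr0n expr1n add0r mul1r mul0r sub0r mul1r sqrrN.
Qed.

End InnerProduct.

Lemma sqr_small_eq0 (R : realFieldType) (r : R) : (forall e, 0 < e -> r ^+ 2 <= e) -> r = 0.
Proof.
move=> small; apply/eqP; apply: contraT => r_neq0.
have r2_gt0 : 0 < r ^+ 2 by rewrite exprn_even_gt0.
by have := small _ (divr_gt0 r2_gt0 (ltr0n R 2)); lra.
Qed.

Lemma invSn_small (R : realType) (r : R) : 0 < r ->
  exists M, forall n, (M <= n)%N -> n.+1%:R^-1 < r.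
Proof.
move=> r_gt0; exists (Num.bound r^-1) => n leMn.
have bound_gt : r^-1 < (Num.bound r^-1)%:R by apply: archi_boundP; rewrite invr_ge0 ltW.
rewrite -[r]invrK ltf_pV2 ?posrE ?ltr0n ?invr_gt0 //.
by apply: (lt_le_trans bound_gt); rewrite ler_nat (leq_trans leMn).
Qed.

Section Convergence.
Variables (R : realType) (V : lmodType R[i]) (ip : V -> V -> R[i]).
Local Notation N := (sqnorm ip).

Definition ip_cauchy (u : nat -> V) := forall e : R, 0 < e ->
  exists M, forall m n, (M <= m)%N -> (M <= n)%N -> N (u m - u n) < e.

Definition ip_cvg (u : nat -> V) (v : V) := forall e : R, 0 < e ->
  exists M, forall n, (M <= n)%N -> N (u n - v) < e.

Lemma ipnorm_lt (hip : inner_product ip) x (e : R) : 0 < e ->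
  (ipnorm ip x < (Num.sqrt e)%:C%C) = (N x < e).
Proof.
move=> e_gt0; rewrite /ipnorm (ip_sqnorm hip).
have -> : sqrtC (N x)%:C%C = (Num.sqrt (N x))%:C%C.
  rewrite -[in LHS](sqr_sqrtr (sqnorm_ge0 hip x)) (rmorphXn (real_complex R)) /=.
  by rewrite sqrCK // ler0c sqrtr_ge0.
by rewrite ltcR ltr_sqrt.
Qed.

Lemma gt0_Csqrt (eps : R[i]) : 0 < eps -> exists2 e : R, 0 < e & eps = (Num.sqrt e)%:C%C.
Proof.
case: eps => a b; rewrite ltcE /= => /andP[/eqP -> a_gt0].
by exists (a ^+ 2); rewrite ?exprn_gt0 // sqrtr_sqr gtr0_norm.
Qed.

Lemma hilbert_ip_cvg : is_hilbert ip -> forall u, ip_cauchy u -> exists v, ip_cvg u v.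
Proof.
move=> [hip complete] u cau; have [|v uv] := complete u.
  move=> _ /gt0_Csqrt[e e_gt0 ->]; have [M hM] := cau e e_gt0.
  by exists M => m n leMm leMn; rewrite (ipnorm_lt hip) // hM.
exists v => e e_gt0; have [|M hM] := uv (Num.sqrt e)%:C%C; first by rewrite ltcR sqrtr_gt0.
by exists M => n leMn; rewrite -(ipnorm_lt hip) // hM.
Qed.

End Convergence.

Section BestApproximation.
Variables (R : realType) (V : lmodType R[i]) (ip : V -> V -> R[i]).
Hypothesis hip : inner_product ip.
Local Notation N := (sqnorm ip).

Lemma sqnorm_midpoint psi a b : N (a - b) =
  2 * N (psi - a) + 2 * N (psi - b) - 4 * N (psi - (2^-1 *: a + 2^-1 *: b)).
Proof.
have := sqnorm_parallelogram hip (psi - a) (psi - b).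
have -> : psi - a - (psi - b) = - (a - b) by rewrite !opprB addrC addrA subrK.
have -> : psi - a + (psi - b) = 2%:R%:C%C *: (psi - (2^-1 *: a + 2^-1 *: b)).
  rewrite scalerBr scalerDr !scalerA (rmorph_nat (real_complex R)).
  by rewrite mulfV ?pnatr_eq0 // !scale1r scaler_nat mulr2n opprD addrACA.
by rewrite (sqnormN hip) (sqnormZr hip); lra.
Qed.

Lemma ip_eq0_of_min w y : (forall c, N w <= N (w - c *: y)) -> ip w y = 0.
Proof.
move=> w_min; set c := ip w y.
set q := complex.Re c ^+ 2 + complex.Im c ^+ 2.
set s := (N y + 1)^-1.
have Ny_ge0 := sqnorm_ge0 hip y.
have s_gt0 : 0 < s by rewrite invr_gt0; lra.
have sNy_lt1 : s * N y < 1 by rewrite mulrC ltr_pdivrMr; lra.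
(* moving along [y] by the real multiple [s] of [c^*] would decrease [N w] unless [c = 0] *)
have := w_min (s%:C%C * c^*).
rewrite (sqnormD hip) (sqnormN hip) (ipNr hip) (sqnormZ hip) (ipZr hip) -/c raddfN /=.
rewrite !ReM !ImM ReJ ImJ /=.
move=> ineq; have q_le0 : s * q <= 0.
  have : 0 <= s * q * (s * N y - 2) by rewrite /q; lra.
  by rewrite nmulr_lge0 //; lra.
have q0 : q = 0.
  apply/eqP; rewrite eq_le addr_ge0 ?sqr_ge0 // andbT.
  by rewrite -(pmulr_rle0 _ s_gt0).
apply: complex_ReIm_inj; apply: sqr_small_eq0 => e e_gt0 /=.
  by have := sqr_ge0 (complex.Im c); rewrite /q in q0; lra.
by have := sqr_ge0 (complex.Re c); rewrite /q in q0; lra.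
Qed.

Lemma ip_eq_of_approx a b x y :
  (forall e, 0 < e -> exists a' b',
     [/\ N (a - a') < e, N (b - b') < e & ip a' x = ip b' y]) ->
  ip a x = ip b y.
Proof.
move=> approx; apply/eqP; rewrite -subr_eq0; apply/eqP.
set c := ip a x - ip b y.
have Nx_ge0 := sqnorm_ge0 hip x; have Ny_ge0 := sqnorm_ge0 hip y.
set C := 2 * (N x + N y) + 1.
have C_gt0 : 0 < C by rewrite /C; lra.
have small (f : R[i] -> R) : (forall u v, f (u - v) = f u - f v) ->
    (forall d w, f (ip d w) ^+ 2 <= N d * N w) -> forall e, 0 < e -> f c ^+ 2 <= e.
  move=> fB f_le e e_gt0; set k := e / C.
  have k_gt0 : 0 < k by rewrite divr_gt0.
  have kC : k * C = e by rewrite /k mulfVK ?gt_eqF.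
  have [a' [b' [aa' bb' ab'x]]] := approx k k_gt0.
  have -> : c = ip (a - a') x - ip (b - b') y by rewrite /c !(ipBl hip) ab'x; ring.
  rewrite fB; set p1 := f _; set p2 := f _.
  have h1 : p1 ^+ 2 <= k * N x.
    by apply: le_trans (f_le _ _) _; rewrite ler_wpM2r // ltW.
  have h2 : p2 ^+ 2 <= k * N y.
    by apply: le_trans (f_le _ _) _; rewrite ler_wpM2r // ltW.
  have {}kC : 2 * (k * N x) + 2 * (k * N y) + k = e by rewrite -kC /C; ring.
  have : (p1 - p2) ^+ 2 <= 2 * p1 ^+ 2 + 2 * p2 ^+ 2 by have := sqr_ge0 (p1 + p2); nra.
  lra.
apply: complex_ReIm_inj; apply: sqr_small_eq0.
  by apply: small => [u v|]; [rewrite raddfB | exact: Re_ip_sqr_le].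
by apply: small => [u v|]; [rewrite raddfB | exact: Im_ip_sqr_le].
Qed.

Lemma sqnorm_cvg_le u v psi (d : R) : ip_cvg ip u v ->
  (forall n, N (psi - u n) < d + n.+1%:R^-1) -> N (psi - v) <= d.
Proof.
move=> uv u_near; apply/ler_addgt0Pr => e e_gt0.
have d2_gt0 : 0 < d + 2.
  by have := u_near 0; rewrite invr1; have := sqnorm_ge0 hip (psi - u 0); lra.
set t := e / (3 * (d + 2)).
have t_gt0 : 0 < t by rewrite divr_gt0 // mulr_gt0.
have td : t * (d + 2) = e / 3 by rewrite /t; field; rewrite gt_eqF.
set k := 1 + t^-1.
have k_gt0 : 0 < k by rewrite addr_gt0 // invr_gt0.
have min_gt0 : 0 < Num.min 1 (e / 3) by rewrite lt_min ltr01 divr_gt0.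
have [M1 small] := invSn_small min_gt0.
have [M2 close] := uv _ (divr_gt0 e_gt0 (mulr_gt0 (ltr0n R 3) k_gt0)).
set n := maxn M1 M2.
have := sqnormD_le_eps hip (psi - u n) (u n - v) t_gt0; rewrite addrA subrK -/k.
have := small n (leq_maxl _ _); rewrite lt_min => /andP[].
have := u_near n; set en := n.+1%:R^-1 => near_d en_lt1 en_small.
have far : (1 + t) * N (psi - u n) <= d + en + t * (d + 2).
  apply: (@le_trans _ _ ((1 + t) * (d + en))); last by nra.
  by rewrite ler_pM2l ?ltW // addr_gt0.
have near_v : k * N (u n - v) < e / 3.
  have := close n (leq_maxr _ _); rewrite ltr_pdivlMr ?mulr_gt0 //.
  by rewrite ltr_pdivlMr //; lra.
lra.
Qed.

Lemma exists_sqnorm_min (S : set V) psi :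
  S !=set0 ->
  (forall s t, S s -> S t -> S (2^-1 *: s + 2^-1 *: t)) ->
  (forall u, (forall n, S (u n)) -> ip_cauchy ip u -> exists2 v, S v & ip_cvg ip u v) ->
  exists2 v, S v & forall s, S s -> N (psi - v) <= N (psi - s).
Proof.
move=> [s0 Ss0] S_mid S_complete.
set E := [set N (psi - s) | s in S].
have E_inf : has_inf E.
  by split; [exists (N (psi - s0)), s0 | exists 0 => _ [s _ <-]; exact: sqnorm_ge0].
set d := inf E.
have d_le s : S s -> d <= N (psi - s) by move=> Ss; apply: ge_inf (proj2 E_inf) _ _; exists s.
have near_inf n : exists s, S s /\ N (psi - s) < d + n.+1%:R^-1.
  have invSn_gt0 : 0 < n.+1%:R^-1 :> R by rewrite invr_gt0.
  by have [_ [s Ss <-] ?] := inf_adherent invSn_gt0 E_inf; exists s.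
have [u u_min] := boolp.choice near_inf.
have Su n : S (u n) by case: (u_min n).
(* the parallelogram law makes every minimizing sequence Cauchy *)
have u_cauchy : ip_cauchy ip u.
  move=> e e_gt0; have [M small] := invSn_small (divr_gt0 e_gt0 (ltr0n R 4)).
  exists M => m n leMm leMn.
  have := sqnorm_midpoint psi (u m) (u n); have := d_le _ (S_mid _ _ (Su m) (Su n)).
  have := (u_min m).2; have := (u_min n).2; have := small m leMm; have := small n leMn.
  set em := m.+1%:R^-1; set en := n.+1%:R^-1; lra.
have [v Sv uv] := S_complete u Su u_cauchy.
exists v => // s Ss; apply: le_trans (d_le s Ss).
by apply: sqnorm_cvg_le uv _ => n; case: (u_min n).
Qed.

End BestApproximation.

Section SymmetricOperator.
Variables (R : realType) (V : lmodType R[i]) (ip : V -> V -> R[i]).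
Hypothesis hip : inner_product ip.
Variables (D : set V) (A : V -> V).
Hypothesis DB : forall x y, D x -> D y -> D (x - y).
Hypothesis AB : forall x y, D x -> D y -> A (x - y) = A x - A y.
Hypothesis A_sym : forall x y, D x -> D y -> ip (A y) x = ip y (A x).

Lemma nonreal_eigenvector_eq0 c u : c \notin Num.real -> D u -> A u - c *: u = 0 -> u = 0.
Proof.
move=> c_nonreal Du /eqP; rewrite subr_eq0 => /eqP Au; apply: sqnorm_eq0 hip _ _.
have := A_sym Du Du; rewrite Au (ipZl hip) (ipZr hip) (ip_sqnorm hip) => /eqP.
rewrite -subr_eq0 -mulrBl mulf_eq0 => /orP[|/eqP []//].
by rewrite subr_eq0 -CrealE (negbTE c_nonreal).
Qed.

Lemma resolvent_eq z psi u : z \notin Num.real -> D u -> A u - z *: u = psi ->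
  resolvent D A z psi = u.
Proof.
move=> z_nonreal Du Au; rewrite /resolvent; case: pselect => [ex|[]]; last by exists u.
case: (cid ex) => v [Dv Av] /=; apply/eqP; rewrite -subr_eq0; apply/eqP.
apply: (nonreal_eigenvector_eq0 z_nonreal (DB Dv Du)).
by rewrite AB // scalerBr subrACA Av Au subrr.
Qed.

End SymmetricOperator.

Section SelfAdjoint.
Variables (R : realType) (V : lmodType R[i]) (ip : V -> V -> R[i]).
Hypothesis hip : inner_product ip.
Variables (D : set V) (A : V -> V).
Hypothesis hA : self_adjoint ip D A.
Local Notation N := (sqnorm ip).

Lemma sa_dom0 : D 0. Proof. by case: hA. Qed.

Lemma sa_domDZ a x y : D x -> D y -> D (a *: x + y).
Proof. by case: hA => _ lin _ _ _ Dx Dy; case: (lin a x y Dx Dy). Qed.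

Lemma sa_DZ a x y : D x -> D y -> A (a *: x + y) = a *: A x + A y.
Proof. by case: hA => _ lin _ _ _ Dx Dy; case: (lin a x y Dx Dy). Qed.

Lemma sa_sym x y : D x -> D y -> ip (A y) x = ip y (A x).
Proof. by case: hA => _ _ _ sym _; apply: sym. Qed.

Lemma sa_domZ a x : D x -> D (a *: x).
Proof. by move=> Dx; rewrite -[_ *: _]addr0; apply: sa_domDZ => //; apply: sa_dom0. Qed.

Lemma sa_domB x y : D x -> D y -> D (x - y).
Proof. by move=> Dx Dy; rewrite addrC -scaleN1r; apply: sa_domDZ. Qed.

Lemma sa_B x y : D x -> D y -> A (x - y) = A x - A y.
Proof. by move=> Dx Dy; rewrite addrC -scaleN1r sa_DZ // scaleN1r addrC. Qed.

Lemma sa_Z a x : D x -> A (a *: x) = a *: A x.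
Proof.
move=> Dx; have A0 : A 0 = 0 by have := sa_B sa_dom0 sa_dom0; rewrite !subrr.
by rewrite -[_ *: x]addr0 sa_DZ // ?A0 ?addr0 //; apply: sa_dom0.
Qed.

Lemma ip_dense_eq0 v : (forall x, D x -> ip v x = 0) -> v = 0.
Proof.
move=> v_orth; apply: sqnorm_eq0 hip _ _; apply/eqP; rewrite eq_le sqnorm_ge0 // andbT.
rewrite leNgt; apply/negP => Nv_gt0.
case: hA => _ _ dense _ _.
have [|x [Dx vx]] := dense v (Num.sqrt (N v / 2))%:C%C.
  by rewrite ltcR sqrtr_gt0 divr_gt0.
rewrite (ipnorm_lt hip) ?divr_gt0 // in vx.
have := Re_ip_le hip v (v - x) ltr01.
by rewrite (ipBr hip) (v_orth x Dx) subr0 invr1 !mul1r /sqnorm; lra.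
Qed.

Variable z : R[i].
Hypothesis z_nonreal : z \notin Num.real.

Lemma sa_shiftDZ a x y : D x -> D y ->
  A (a *: x + y) - z *: (a *: x + y) = a *: (A x - z *: x) + (A y - z *: y).
Proof.
move=> Dx Dy; rewrite sa_DZ // scalerDr !scalerBr !scalerA [z * a]mulrC.
by rewrite opprD addrACA.
Qed.

Lemma sa_shiftZ a x : D x -> A (a *: x) - z *: (a *: x) = a *: (A x - z *: x).
Proof. by move=> Dx; rewrite sa_Z // scalerBr !scalerA mulrC. Qed.

Lemma sa_shiftB x y : D x -> D y ->
  A (x - y) - z *: (x - y) = (A x - z *: x) - (A y - z *: y).
Proof. by move=> Dx Dy; rewrite sa_B // scalerBr subrACA. Qed.

Lemma sqnorm_shift_ge v : D v -> complex.Im z ^+ 2 * N v <= N (A v - z *: v).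
Proof.
move=> Dv; set a := complex.Re z; set b := complex.Im z.
have -> : A v - z *: v = (A v - a%:C%C *: v) + - ((b%:C%C * 'i) *: v).
  rewrite -addrA -opprD -scalerDl; congr (_ - _ *: _).
  by apply: complex_ReIm_inj; rewrite /= ?ReM ?ImM /= /a /b; ring.
set p := A v - _; set q := - _.
(* [ip (A v) v] is real, so [p] and [q] are orthogonal *)
have Av_real : ip (A v) v = (complex.Re (ip (A v) v))%:C%C.
  apply: complex_ReIm_inj => //=.
  have := sa_sym Dv Dv; rewrite [RHS](ipC hip) => /(congr1 (fun c => complex.Im c)).
  by rewrite ImJ; lra.
have pq : complex.Re (ip p q) = 0.
  rewrite /q (ipNr hip) (ipZr hip) /p (ipBl hip) (ipZl hip) (ip_sqnorm hip) Av_real.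
  by rewrite (conj_Creal (Creal_real a)); simpc.
rewrite (sqnormD hip) pq (sqnormN hip) (sqnormZ hip) !ReM !ImM /=.
by have := sqnorm_ge0 hip p; lra.
Qed.

Lemma sa_shift_closed (uu : nat -> V) u m : (forall n, D (uu n)) ->
  ip_cvg ip uu u -> ip_cvg ip (fun n => A (uu n) - z *: uu n) m ->
  D u /\ A u - z *: u = m.
Proof.
move=> Duu uu_u Tuu_m.
set K := complex.Re z ^+ 2 + complex.Im z ^+ 2.
have K_ge0 : 0 <= K by rewrite addr_ge0 ?sqr_ge0.
have adj x : D x -> ip (m + z *: u) x = ip u (A x).
  move=> Dx; apply: (ip_eq_of_approx hip) => e e_gt0.
  set d := e / (2 * K + 3).
  have d_gt0 : 0 < d by rewrite divr_gt0 //; lra.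
  have dK : d * (2 * K + 3) = e by rewrite /d mulfVK // gt_eqF //; lra.
  have [M1 close1] := uu_u d d_gt0; have [M2 close2] := Tuu_m d d_gt0.
  set n := maxn M1 M2; have {}close1 := close1 n (leq_maxl _ _).
  have {}close2 := close2 n (leq_maxr _ _).
  exists (A (uu n)), (uu n); split; last exact: sa_sym.
    have -> : m + z *: u - A (uu n) = (m - (A (uu n) - z *: uu n)) + z *: (u - uu n).
      by rewrite scalerBr opprB addrACA [z *: uu n - _ - _]addrAC subrr add0r.
    apply: le_lt_trans (sqnormD_le hip _ _) _; rewrite (sqnormZ hip) -/K.
    rewrite (sqnormBC hip) (sqnormBC hip u); have := sqnorm_ge0 hip (uu n - u).
    nra.
  by rewrite (sqnormBC hip); apply: lt_le_trans close1 _; rewrite ler_pdivrMr; nra.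
have Du : D u by case: hA => _ _ _ _ adjD; apply: adjD adj.
split=> //; apply/eqP; rewrite subr_eq; apply/eqP/subr0_eq.
by apply: ip_dense_eq0 => x Dx; rewrite (ipBl hip) sa_sym // adj // subrr.
Qed.

Lemma sa_shift_orth_eq0 w : (forall x, D x -> ip w (A x - z *: x) = 0) -> w = 0.
Proof.
move=> w_orth.
have adj x : D x -> ip (z^* *: w) x = ip w (A x).
  move=> Dx; rewrite (ipZl hip) conjCK -[A x](subrK (z *: x)).
  by rewrite (ipDr hip) w_orth // add0r (ipZr hip).
have Dw : D w by case: hA => _ _ _ _ adjD; apply: adjD adj.
have z'_nonreal : z^* \notin Num.real by rewrite CrealE conjCK eq_sym -CrealE.
apply: (nonreal_eigenvector_eq0 hip sa_sym z'_nonreal Dw); apply: ip_dense_eq0 => x Dx.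
by rewrite (ipBl hip) sa_sym // adj // subrr.
Qed.

Hypothesis complete : forall u, ip_cauchy ip u -> exists v, ip_cvg ip u v.
Local Notation range := [set A u - z *: u | u in D].

Lemma sa_shift_range_complete w : (forall n, range (w n)) ->
  ip_cauchy ip w -> exists2 v, range v & ip_cvg ip w v.
Proof.
move=> w_range w_cauchy.
have preimage n : exists u, D u /\ A u - z *: u = w n.
  by have [u Du Tu] := w_range n; exists u.
have [uu uu_w] := boolp.choice preimage.
have Duu n : D (uu n) by case: (uu_w n).
have b2_gt0 : 0 < complex.Im z ^+ 2.
  by rewrite exprn_even_gt0 //; move: z_nonreal; case: (z) => a b; rewrite complex_real.
have [u uu_u] : exists u, ip_cvg ip uu u.
  apply: complete => e e_gt0; have [M close] := w_cauchy _ (mulr_gt0 b2_gt0 e_gt0).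
  exists M => m n leMm leMn; rewrite -(ltr_pM2l b2_gt0).
  apply: le_lt_trans (sqnorm_shift_ge (sa_domB (Duu m) (Duu n))) _.
  by rewrite sa_shiftB // (uu_w m).2 (uu_w n).2 close.
have [v w_v] := complete w_cauchy.
have [|Du Tu] := sa_shift_closed Duu uu_u (m := v).
  by move=> e /w_v[M close]; exists M => n leMn; rewrite (uu_w n).2 close.
by exists v => //; exists u.
Qed.

Lemma sa_shift_surj psi : exists2 u, D u & A u - z *: u = psi.
Proof.
have [|||_ [u Du <-] u_min] := exists_sqnorm_min hip psi (S := range).
- by exists (A 0 - z *: 0), 0 => //; apply: sa_dom0.
- move=> _ _ [x Dx <-] [y Dy <-]; exists (2^-1 *: x + 2^-1 *: y).
    by apply: sa_domDZ => //; apply: sa_domZ.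
  by rewrite sa_shiftDZ ?sa_shiftZ //; apply: sa_domZ.
- exact: sa_shift_range_complete.
exists u => //; apply/eqP; rewrite eq_sym -subr_eq0; apply/eqP.
(* [psi - (A u - z u)] is orthogonal to the range since [A u - z u] is the closest point to [psi] *)
apply: sa_shift_orth_eq0 => x Dx; apply: (ip_eq0_of_min hip) => c.
have Dcxu : D (c *: x + u) by apply: sa_domDZ.
have := u_min _ (ex_intro2 _ _ _ Dcxu erefl).
set Tu := A u - z *: u; set Tx := A x - z *: x.
by rewrite sa_shiftDZ // -/Tu -/Tx (addrC (c *: Tx)) [- (Tu + _)]opprD addrA.
Qed.

End SelfAdjoint.

Lemma sumV_eq (R : realType) (Vl VS Vr : lmodType R[i]) (u v : sumV Vl VS Vr) :
  u.1.1 = v.1.1 -> u.1.2 = v.1.2 -> u.2 = v.2 -> u = v.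
Proof. by case: u => [[a b] c]; case: v => [[a' b'] c'] /= -> -> ->. Qed.

Section DirectSum.
Variables (R : realType) (Vl VS Vr : lmodType R[i]).
Variables (ipl : Vl -> Vl -> R[i]) (ipS : VS -> VS -> R[i]) (ipr : Vr -> Vr -> R[i]).
Hypotheses (hipl : inner_product ipl) (hipS : inner_product ipS) (hipr : inner_product ipr).
Local Notation V := (sumV Vl VS Vr).
Local Notation ip := (sum_ip ipl ipS ipr).

Lemma sum_ip_inner : inner_product ip.
Proof.
split.
- move=> a x y w; rewrite /sum_ip /= (ipDr hipl) (ipDr hipS) (ipDr hipr).
  by rewrite (ipZr hipl) (ipZr hipS) (ipZr hipr); ring.
- by move=> x y; rewrite /sum_ip !rmorphD /= -(ipC hipl) -(ipC hipS) -(ipC hipr).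
- move=> x; rewrite /sum_ip (ip_sqnorm hipl) (ip_sqnorm hipS) (ip_sqnorm hipr).
  by rewrite -!rmorphD ler0c !addr_ge0 ?sqnorm_ge0.
- move=> x; rewrite /sum_ip (ip_sqnorm hipl) (ip_sqnorm hipS) (ip_sqnorm hipr).
  rewrite -!rmorphD /= => /complexI /eqP.
  rewrite !paddr_eq0 ?addr_ge0 ?sqnorm_ge0 // => /andP[/andP[/eqP xl /eqP xS] /eqP xr].
  by apply: sumV_eq; [exact: (sqnorm_eq0 hipl) | exact: (sqnorm_eq0 hipS) |
    exact: (sqnorm_eq0 hipr)].
Qed.

Lemma sum_ip_inl (v : Vl) x : ip (inl3 VS Vr v) x = ipl v x.1.1.
Proof. by rewrite /sum_ip /= (ip0l hipS) (ip0l hipr) !addr0. Qed.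

Lemma sum_ip_inS (v : VS) x : ip (inS3 Vl Vr v) x = ipS v x.1.2.
Proof. by rewrite /sum_ip /= (ip0l hipl) (ip0l hipr) add0r addr0. Qed.

Lemma sum_ip_inr (v : Vr) x : ip (inr3 Vl VS v) x = ipr v x.2.
Proof. by rewrite /sum_ip /= (ip0l hipl) (ip0l hipS) !add0r. Qed.

End DirectSum.

Section TwoChannelHamiltonian.
Variables (R : realType) (Vl VS Vr : lmodType R[i]).
Variables (ipl : Vl -> Vl -> R[i]) (ipS : VS -> VS -> R[i]) (ipr : Vr -> Vr -> R[i]).
Hypotheses (hipl : inner_product ipl) (hipS : inner_product ipS) (hipr : inner_product ipr).
Variables (Dl : set Vl) (Hl : Vl -> Vl) (DS : set VS) (HS : VS -> VS).
Variables (Dr : set Vr) (Hr : Vr -> Vr).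
Hypotheses (saHl : self_adjoint ipl Dl Hl) (saHS : self_adjoint ipS DS HS).
Hypothesis saHr : self_adjoint ipr Dr Hr.
Variables (chil : Vl) (chir : Vr) (dl dr : VS).
Local Notation V := (sumV Vl VS Vr).
Local Notation ip := (sum_ip ipl ipS ipr).
Local Notation H lam nu := (Hlamnu ipl ipS ipr Hl HS Hr chil chir dl dr lam nu).
Local Notation Dom := (dom0 Dl DS Dr).

Lemma Hlamnu_l lam nu x : (H lam nu x).1.1 = Hl x.1.1 + (lam%:C%C * ipS dl x.1.2) *: chil.
Proof. by rewrite /Hlamnu /= (sum_ip_inS _ hipl hipr) !(scaler0, add0r, addr0) scalerA. Qed.

Lemma Hlamnu_S lam nu x : (H lam nu x).1.2 =
  HS x.1.2 + (lam%:C%C * ipl chil x.1.1) *: dl + (nu%:C%C * ipr chir x.2) *: dr.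
Proof.
rewrite /Hlamnu /= (sum_ip_inl _ hipS hipr) (sum_ip_inr _ hipl hipS).
by rewrite !(scaler0, add0r, addr0) !scalerA.
Qed.

Lemma Hlamnu_r lam nu x : (H lam nu x).2 = Hr x.2 + (nu%:C%C * ipS dr x.1.2) *: chir.
Proof. by rewrite /Hlamnu /= !(sum_ip_inS _ hipl hipr) !(scaler0, add0r, addr0) scalerA. Qed.

Lemma H0_Hlamnu : H0 Hl HS Hr = H 0 0.
Proof.
apply: funext => x; apply: sumV_eq.
- by rewrite Hlamnu_l mul0r scale0r addr0.
- by rewrite Hlamnu_S !mul0r !scale0r !addr0.
- by rewrite Hlamnu_r mul0r scale0r addr0.
Qed.

Lemma dom0B x y : Dom x -> Dom y -> Dom (x - y).
Proof.
move=> [Dxl [DxS Dxr]] [Dyl [DyS Dyr]].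
by split; [exact: (sa_domB saHl) | split; [exact: (sa_domB saHS) | exact: (sa_domB saHr)]].
Qed.

Lemma HlamnuB lam nu x y : Dom x -> Dom y -> H lam nu (x - y) = H lam nu x - H lam nu y.
Proof.
move=> [Dxl [DxS Dxr]] [Dyl [DyS Dyr]]; apply: sumV_eq.
- rewrite -[RHS]/((H lam nu x).1.1 - (H lam nu y).1.1) !Hlamnu_l /=.
  by rewrite (sa_B saHl) // (ipBr hipS) mulrBr scalerBl addrBB.
- rewrite -[RHS]/((H lam nu x).1.2 - (H lam nu y).1.2) !Hlamnu_S /=.
  rewrite (sa_B saHS) // (ipBr hipl) (ipBr hipr) !mulrBr !scalerBl.
  by rewrite 2!addrBB.
- rewrite -[RHS]/((H lam nu x).2 - (H lam nu y).2) !Hlamnu_r /=.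
  by rewrite (sa_B saHr) // (ipBr hipS) mulrBr scalerBl addrBB.
Qed.

Lemma Hlamnu_sym lam nu x y : Dom x -> Dom y -> ip (H lam nu y) x = ip y (H lam nu x).
Proof.
move=> [Dxl [DxS Dxr]] [Dyl [DyS Dyr]].
rewrite /sum_ip !Hlamnu_l !Hlamnu_S !Hlamnu_r.
rewrite !(ipDl hipl, ipDl hipS, ipDl hipr, ipZl hipl, ipZl hipS, ipZl hipr).
rewrite !(ipDr hipl, ipDr hipS, ipDr hipr, ipZr hipl, ipZr hipS, ipZr hipr).
rewrite (sa_sym saHl) // (sa_sym saHS) // (sa_sym saHr) //.
rewrite !rmorphM /= !(conj_Creal (Creal_real lam), conj_Creal (Creal_real nu)).
by rewrite -!(ipC hipl) -!(ipC hipS) -!(ipC hipr); ring.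
Qed.

Lemma resolvent_Hlamnu lam nu z psi u : z \notin Num.real ->
  Dom u -> H lam nu u - z *: u = psi -> resolvent Dom (H lam nu) z psi = u.
Proof.
apply: (resolvent_eq (sum_ip_inner hipl hipS hipr) dom0B); first exact: HlamnuB.
exact: Hlamnu_sym.
Qed.

Variable z : R[i].
Hypothesis z_nonreal : z \notin Num.real.
Variables (ul : Vl) (sl sr : VS) (ur : Vr).
Hypotheses (Dul : Dl ul) (Dsl : DS sl) (Dsr : DS sr) (Dur : Dr ur).
Hypotheses (ul_res : Hl ul - z *: ul = chil) (ur_res : Hr ur - z *: ur = chir).
Hypotheses (sl_res : HS sl - z *: sl = dl) (sr_res : HS sr - z *: sr = dr).

Definition ansatz (x s t y : R[i]) : V := (x *: ul, s *: sl + t *: sr, y *: ur).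

Lemma dom0_ansatz x s t y : Dom (ansatz x s t y).
Proof.
split; [|split]; rewrite /=.
- exact: (sa_domZ saHl).
- by apply: (sa_domDZ saHS) => //; apply: (sa_domZ saHS).
- exact: (sa_domZ saHr).
Qed.

Definition ansatz_image (lam nu : R) (x s t y : R[i]) : V :=
  ((x + lam%:C%C * (s * ipS dl sl + t * ipS dl sr)) *: chil,
   (s + lam%:C%C * (x * ipl chil ul)) *: dl + (t + nu%:C%C * (y * ipr chir ur)) *: dr,
   (y + nu%:C%C * (s * ipS dr sl + t * ipS dr sr)) *: chir).

Lemma Hlamnu_ansatz lam nu x s t y :
  H lam nu (ansatz x s t y) - z *: ansatz x s t y = ansatz_image lam nu x s t y.
Proof.
apply: sumV_eq.
- rewrite -[LHS]/((H lam nu _).1.1 - z *: (x *: ul)) Hlamnu_l /=.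
  rewrite (ipDr hipS) !(ipZr hipS) addrAC (sa_shiftZ saHl) // ul_res.
  by rewrite scalerDl.
- rewrite -[LHS]/((H lam nu _).1.2 - z *: (s *: sl + t *: sr)) Hlamnu_S /=.
  rewrite (ipZr hipl) (ipZr hipr) addrAC [HS _ + _ - _]addrAC.
  (* unfold the coercion wrapper left by [sa_shiftDZ], which blocks [sa_shiftZ] *)
  rewrite (sa_shiftDZ saHS z s Dsl (sa_domZ saHS t Dsr)) /reverse_coercion.
  rewrite (sa_shiftZ saHS z t Dsr) sl_res sr_res.
  by rewrite [s *: dl + _ + _]addrAC -scalerDl -addrA -scalerDl.
- rewrite -[LHS]/((H lam nu _).2 - z *: (y *: ur)) Hlamnu_r /=.
  rewrite (ipDr hipS) !(ipZr hipS) addrAC (sa_shiftZ saHr) // ur_res.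
  by rewrite scalerDl.
Qed.

Lemma green_Hlamnu_ansatz x s t y lam nu phi psi : ansatz_image lam nu x s t y = psi ->
  green ip Dom (H lam nu) phi psi z = ip phi (ansatz x s t y).
Proof.
move=> image_psi; rewrite /green (resolvent_Hlamnu z_nonreal (dom0_ansatz x s t y)) //.
by rewrite Hlamnu_ansatz.
Qed.

Lemma ansatz_image00 x s t y :
  ansatz_image 0 0 x s t y = (x *: chil, s *: dl + t *: dr, y *: chir).
Proof. by rewrite /ansatz_image !mul0r !addr0. Qed.

Lemma ip_inl_ansatz x s t y : ip (inl3 VS Vr chil) (ansatz x s t y) = x * ipl chil ul.
Proof. by rewrite (sum_ip_inl _ hipS hipr) (ipZr hipl). Qed.

Lemma ip_inr_ansatz x s t y : ip (inr3 Vl VS chir) (ansatz x s t y) = y * ipr chir ur.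
Proof. by rewrite (sum_ip_inr _ hipl hipS) (ipZr hipr). Qed.

Lemma ip_inS_ansatz d x s t y :
  ip (inS3 Vl Vr d) (ansatz x s t y) = s * ipS d sl + t * ipS d sr.
Proof. by rewrite (sum_ip_inS _ hipl hipr) (ipDr hipS) !(ipZr hipS). Qed.

Local Notation G0 phi psi := (green ip Dom (H0 Hl HS Hr) phi psi z).

Lemma green0_inl phi : G0 phi (inl3 VS Vr chil) = ip phi (ansatz 1 0 0 0).
Proof.
rewrite H0_Hlamnu; apply: green_Hlamnu_ansatz; rewrite ansatz_image00.
by apply: sumV_eq; rewrite /= ?scale1r ?scale0r ?addr0.
Qed.

Lemma green0_inr phi : G0 phi (inr3 Vl VS chir) = ip phi (ansatz 0 0 0 1).
Proof.
rewrite H0_Hlamnu; apply: green_Hlamnu_ansatz; rewrite ansatz_image00.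
by apply: sumV_eq; rewrite /= ?scale1r ?scale0r ?addr0.
Qed.

Lemma green0_inS_l phi : G0 phi (inS3 Vl Vr dl) = ip phi (ansatz 0 1 0 0).
Proof.
rewrite H0_Hlamnu; apply: green_Hlamnu_ansatz; rewrite ansatz_image00.
by apply: sumV_eq; rewrite /= ?scale1r ?scale0r ?addr0.
Qed.

Lemma green0_inS_r phi : G0 phi (inS3 Vl Vr dr) = ip phi (ansatz 0 0 1 0).
Proof.
rewrite H0_Hlamnu; apply: green_Hlamnu_ansatz; rewrite ansatz_image00.
by apply: sumV_eq; rewrite /= ?scale1r ?scale0r ?add0r.
Qed.

Variables lam nu : R.
Local Notation L := (lam%:C%C : R[i]).
Local Notation Nu := (nu%:C%C : R[i]).
Local Notation lam2 := ((lam ^+ 2)%:C%C : R[i]).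
Local Notation nu2 := ((nu ^+ 2)%:C%C : R[i]).
(* [gl], [gr] and [g11], ..., [g22] are the free Green functions G_0(chi_l, chi_l),
   G_0(chi_r, chi_r) and G_0(delta_i, delta_j), see [green0_inl] etc. *)
Local Notation gl := (ipl chil ul).
Local Notation gr := (ipr chir ur).
Local Notation g11 := (ipS dl sl).
Local Notation g12 := (ipS dl sr).
Local Notation g21 := (ipS dr sl).
Local Notation g22 := (ipS dr sr).
Local Notation Dz := ((1 - nu2 * gr * g22) * (1 - lam2 * gl * g11)
  - nu2 * lam2 * gr * gl * g12 * g21).

Lemma green_det_neq0 : Dz != 0.
Proof.
apply/eqP => det0.
have [|s [t [st_neq0 eq1 eq2]]] := @det2_eq0_kernel _ (1 - lam2 * gl * g11)
  (- (lam2 * gl * g12)) (- (nu2 * gr * g21)) (1 - nu2 * gr * g22).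
  by rewrite -det0; ring.
(* a kernel vector of the 2x2 system is the coefficient vector of an eigenvector of
   [H lam nu] for the non-real [z] *)
set bl := s * g11 + t * g12; set br := s * g21 + t * g22.
have ansatz0 : ansatz (- (L * bl)) s t (- (Nu * br)) = 0.
  apply: (nonreal_eigenvector_eq0 (sum_ip_inner hipl hipS hipr) (@Hlamnu_sym lam nu)).
  - exact: z_nonreal.
  - exact: dom0_ansatz.
  rewrite Hlamnu_ansatz; apply: sumV_eq => /=.
  - by rewrite -/bl addNr scale0r.
  - have -> : s + L * (- (L * bl) * gl) = (1 - lam2 * gl * g11) * s + - (lam2 * gl * g12) * t.
      by rewrite /bl; ring.
    have -> : t + Nu * (- (Nu * br) * gr) = - (nu2 * gr * g21) * s + (1 - nu2 * gr * g22) * t.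
      by rewrite /br; ring.
    by rewrite eq1 eq2 !scale0r addr0.
  - by rewrite -/br addNr scale0r.
have mid0 : s *: sl + t *: sr = 0 := congr1 (fun v => v.1.2) ansatz0.
have bl0 : bl = 0 by rewrite /bl -!(ipZr hipS) -(ipDr hipS) mid0 (ip0r hipS).
have br0 : br = 0 by rewrite /br -!(ipZr hipS) -(ipDr hipS) mid0 (ip0r hipS).
have s0 : s = 0.
  have : (1 - lam2 * gl * g11) * s + - (lam2 * gl * g12) * t = s - lam2 * gl * bl.
    by rewrite /bl; ring.
  by rewrite eq1 bl0 mulr0 subr0.
have t0 : t = 0.
  have : - (nu2 * gr * g21) * s + (1 - nu2 * gr * g22) * t = t - nu2 * gr * br.
    by rewrite /br; ring.
  by rewrite eq2 br0 mulr0 subr0.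
by case: st_neq0; rewrite ?s0 ?t0 eqxx.
Qed.

Local Notation G phi psi := (green ip Dom (H lam nu) phi psi z).

Lemma green_Hlamnu_inS_l : G (inS3 Vl Vr dl) (inS3 Vl Vr dl) =
  ((1 - nu2 * gr * g22) * g11 + nu2 * gr * g12 * g21) / Dz.
Proof.
have kDz : Dz * Dz^-1 = 1 by rewrite mulfV // green_det_neq0.
set k := Dz^-1 in kDz *.
pose s := (1 - nu2 * gr * g22) * k; pose t := nu2 * gr * g21 * k.
rewrite (green_Hlamnu_ansatz (x := - (L * (s * g11 + t * g12))) (s := s) (t := t)
  (y := - (Nu * (s * g21 + t * g22)))) ?ip_inS_ansatz; first by rewrite /s /t; ring.
apply: sumV_eq => /=; rewrite ?addNr ?scale0r //.
have -> : s + L * (- (L * (s * g11 + t * g12)) * gl) = Dz * k by rewrite /s /t; ring.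
have -> : t + Nu * (- (Nu * (s * g21 + t * g22)) * gr) = 0 by rewrite /s /t; ring.
by rewrite kDz scale1r scale0r addr0.
Qed.

Lemma green_Hlamnu_inl : G (inl3 VS Vr chil) (inl3 VS Vr chil) =
  (gl * (1 - nu2 * gr * g22)) / Dz.
Proof.
have kDz : Dz * Dz^-1 = 1 by rewrite mulfV // green_det_neq0.
set k := Dz^-1 in kDz *.
pose s := - (L * gl) * (1 - nu2 * gr * g22) * k; pose t := - (L * gl) * (nu2 * gr * g21) * k.
rewrite (green_Hlamnu_ansatz (x := 1 - L * (s * g11 + t * g12)) (s := s) (t := t)
  (y := - (Nu * (s * g21 + t * g22)))) ?ip_inl_ansatz.
  have -> : (1 - L * (s * g11 + t * g12)) * gl =
    gl * (1 - nu2 * gr * g22) * k + gl * (1 - Dz * k) by rewrite /s /t; ring.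
  by rewrite kDz subrr mulr0 addr0.
apply: sumV_eq => /=; rewrite ?subrK ?addNr ?scale1r ?scale0r //.
have -> : s + L * ((1 - L * (s * g11 + t * g12)) * gl) = L * gl * (1 - Dz * k).
  by rewrite /s /t; ring.
have -> : t + Nu * (- (Nu * (s * g21 + t * g22)) * gr) = 0 by rewrite /s /t; ring.
by rewrite kDz subrr mulr0 !scale0r addr0.
Qed.

Local Notation cl := (inl3 VS Vr chil).
Local Notation cr := (inr3 Vl VS chir).
Local Notation el := (inS3 Vl Vr dl).
Local Notation er := (inS3 Vl Vr dr).

Lemma green_Hlamnu_two_channel :
  let Dz0 := (1 - nu2 * G0 cr cr * G0 er er) * (1 - lam2 * G0 cl cl * G0 el el)
             - nu2 * lam2 * G0 cr cr * G0 cl cl * G0 el er * G0 er el in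
  G el el = ((1 - nu2 * G0 cr cr * G0 er er) * G0 el el
             + nu2 * G0 cr cr * G0 el er * G0 er el) / Dz0
  /\ G cl cl = (G0 cl cl * (1 - nu2 * G0 cr cr * G0 er er)) / Dz0.
Proof.
rewrite /= green_Hlamnu_inS_l green_Hlamnu_inl !green0_inl !green0_inr.
rewrite !green0_inS_l !green0_inS_r ip_inl_ansatz ip_inr_ansatz !ip_inS_ansatz.
by rewrite !(mul0r, mul1r, add0r, addr0).
Qed.

End TwoChannelHamiltonian.

Theorem lemma2p1 (R : realType) (Vl VS Vr : lmodType R[i])
    (ipl : Vl -> Vl -> R[i]) (ipS : VS -> VS -> R[i]) (ipr : Vr -> Vr -> R[i])
    (hl : is_hilbert ipl) (hS : is_hilbert ipS) (hr : is_hilbert ipr)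
    (fdS : finite_dim VS)
    (Dl : set Vl) (Hl : Vl -> Vl) (DS : set VS) (HS : VS -> VS)
    (Dr : set Vr) (Hr : Vr -> Vr)
    (saHl : self_adjoint ipl Dl Hl) (saHS : self_adjoint ipS DS HS)
    (saHr : self_adjoint ipr Dr Hr)
    (chil : Vl) (chir : Vr) (dl dr : VS)
    (chil0 : chil != 0) (chir0 : chir != 0) (dl0 : dl != 0) (dr0 : dr != 0)
    (lam nu : R) (z : R[i]) (hz : z \notin Num.real) :
  let ip := sum_ip ipl ipS ipr in
  let D0 := dom0 Dl DS Dr in
  let G0 := fun phi psi : sumV Vl VS Vr => green ip D0 (H0 Hl HS Hr) phi psi z in
  let G := fun phi psi : sumV Vl VS Vr =>
    green ip D0 (Hlamnu ipl ipS ipr Hl HS Hr chil chir dl dr lam nu) phi psi z in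
  let cl := inl3 VS Vr chil in
  let cr := inr3 Vl VS chir in
  let el := inS3 Vl Vr dl in
  let er := inS3 Vl Vr dr in
  let nu2 := (nu ^+ 2)%:C%C in
  let lam2 := (lam ^+ 2)%:C%C in
  let Dz := (1 - nu2 * G0 cr cr * G0 er er) * (1 - lam2 * G0 cl cl * G0 el el)
            - nu2 * lam2 * G0 cr cr * G0 cl cl * G0 el er * G0 er el in
  G el el = ((1 - nu2 * G0 cr cr * G0 er er) * G0 el el
             + nu2 * G0 cr cr * G0 el er * G0 er el) / Dz
  /\ G cl cl = (G0 cl cl * (1 - nu2 * G0 cr cr * G0 er er)) / Dz.
Proof.
have [ul Dul ul_res] := sa_shift_surj hl.1 saHl hz (hilbert_ip_cvg hl) chil.
have [sl Dsl sl_res] := sa_shift_surj hS.1 saHS hz (hilbert_ip_cvg hS) dl.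
have [sr Dsr sr_res] := sa_shift_surj hS.1 saHS hz (hilbert_ip_cvg hS) dr.
have [ur Dur ur_res] := sa_shift_surj hr.1 saHr hz (hilbert_ip_cvg hr) chir.
exact: (green_Hlamnu_two_channel hl.1 hS.1 hr.1 saHl saHS saHr hz
  Dul Dsl Dsr Dur ul_res ur_res sl_res sr_res).
Qed.
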